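(* Let $\mathbf{S}=\mathbf{V}\boldsymbol{\Lambda}\mathbf{V}^{\mathsf{H}}$ and $\hat{\mathbf{S}}$ be $N\times N$ graph shift operators. Let $\mathbf{E}=\mathbf{S}-\mathbf{P}_0^{\mathsf{T}}\hat{\mathbf{S}}\mathbf{P}_0$, where $\mathbf{P}_0\in\mathcal{P}$ attains $\min_{\mathbf{P}\in\mathcal{P}}\|\mathbf{S}-\mathbf{P}^{\mathsf{T}}\hat{\mathbf{S}}\mathbf{P}\|$ (the absolute perturbation modulo permutation), with eigendecomposition $\mathbf{E}=\mathbf{U}\mathbf{M}\mathbf{U}^{\mathsf{H}}$, and assume $$\|\mathbf{S}-\hat{\mathbf{S}}\|_{\mathcal{P}}=\|\mathbf{E}\|\le\varepsilon.$$ Then for any Lipschitz filter $\mathbf{h}$ with Lipschitz constant $C$, $$\|\mathbf{H}(\mathbf{S})-\mathbf{H}(\hat{\mathbf{S}})\|_{\mathcal{P}}\le C\left(1+\delta\sqrt{N}\right)\varepsilon+\mathcal{O}(\varepsilon^2),$$ where $\delta:=(\|\mathbf{U}-\mathbf{V}\|_2+1)^2-1$ is the eigenvector misalignment between $\mathbf{S}$ and $\mathbf{E}$.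
   Context: A graph shift operator is a real symmetric $N\times N$ matrix; $\mathbf{S}=\mathbf{V}\boldsymbol{\Lambda}\mathbf{V}^{\mathsf{H}}$ with $\mathbf{V}$ orthonormal eigenvectors and $\boldsymbol{\Lambda}$ diagonal eigenvalues; likewise $\mathbf{U}$ orthonormal and $\mathbf{M}$ diagonal for $\mathbf{E}$. $\|\cdot\|$ and $\|\cdot\|_2$ denote the spectral (operator) norm for matrices and Euclidean norm for vectors. $\mathcal{P}$ is the set of $N\times N$ permutation matrices. For linear operators, $\|\mathbf{A}-\hat{\mathbf{A}}\|_{\mathcal{P}}=\min_{\mathbf{P}\in\mathcal{P}}\max_{\|\mathbf{x}\|=1}\|\mathbf{P}^{\mathsf{T}}(\mathbf{A}\mathbf{x})-\hat{\mathbf{A}}(\mathbf{P}^{\mathsf{T}}\mathbf{x})\|$. A filter is a coefficient sequence $\mathbf{h}=\{h_k\}_{k\ge0}$ defining $\mathbf{H}(\mathbf{S})=\sum_k h_k\mathbf{S}^k$ and frequency response $h(\lambda)=\sum_k h_k\lambda^k$ (an analytic function), required to satisfy $|h(\lambda)|\le1$. The filter is Lipschitz with constant $C>0$ if $|h(\lambda_2)-h(\lambda_1)|\le C|\lambda_2-\lambda_1|$ for all $\lambda_1,\lambda_2$. $\mathcal{O}(\varepsilon^2)$ denotes a term bounded by a constant times $\varepsilon^2$. *)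

From HB Require Import structures.
From mathcomp Require Import all_boot all_order all_algebra perm.
From mathcomp Require Import all_classical all_reals all_analysis.
Set Implicit Arguments. Unset Strict Implicit. Unset Printing Implicit Defensive.
Import Order.TTheory GRing.Theory Num.Theory numFieldNormedType.Exports.
Local Open Scope classical_set_scope.
Local Open Scope ring_scope.

Definition vnorm (R : realType) (N : nat) (x : 'cV[R]_N) : R :=
  Num.sqrt (\sum_(i < N) x i ord0 ^+ 2).

Definition opnorm (R : realType) (N : nat) (A : 'M[R]_N) : R :=
  sup [set vnorm (A *m x) | x in [set x : 'cV[R]_N | vnorm x = 1]].

(* ||A - Ahat||_P = min_{P in perms} max_{||x||=1} ||P^T (A x) - Ahat (P^T x)||
   = min_P opnorm (P^T A - Ahat P^T).  The min over the finite nonempty set of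
   permutation matrices is taken with seed the value at the identity. *)
Definition pnorm (R : realType) (N : nat) (A Ahat : 'M[R]_N) : R :=
  \big[Num.min/opnorm (A - Ahat)]_(s : 'S_N)
     opnorm ((perm_mx s)^T *m A - Ahat *m (perm_mx s)^T).

Definition gso (R : realType) (N : nat) (S : 'M[R]_N) : Prop := S^T = S.

Definition orthonormal_mx (R : realType) (N : nat) (V : 'M[R]_N) : Prop :=
  V^T *m V = 1%:M.

Definition freq_resp (R : realType) (h : nat -> R) (l : R) : R :=
  limn (series (fun k => h k * l ^+ k)).

Definition graph_filter (R : realType) (N : nat) (h : nat -> R) (S : 'M[R]_N)
  : 'M[R]_N :=
  \matrix_(i, j) limn (series (fun k => h k * (S ^+ k) i j)).

From HB Require Import structures.
From mathcomp Require Import all_boot all_order all_algebra perm.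
From mathcomp Require Import all_classical all_reals all_analysis.
From mathcomp Require Import complex ring.
Import Order.TTheory GRing.Theory Num.Theory numFieldNormedType.Exports.
Set Implicit Arguments. Unset Strict Implicit. Unset Printing Implicit Defensive.
Local Open Scope ring_scope.

(* Align [Shat] by the permutation [P := perm_mx s0]; write [T := P^T Shat P = S - E]
   as [Q diag(be) Q^T] (real spectral theorem, by Householder deflation). As
   [H(T) = P^T H(Shat) P], the permutation distance is at most [|H(S) - H(T)|].
   Insert [V h(lam - mu) V^T], where [E = U diag(mu) U^T]:
   - [|H(S) - V h(lam - mu) V^T| = max_i |h(lam_i) - h(lam_i - mu_i)| <= C |E|],
     because every [|mu_i| <= |E|];
   - in the Frobenius norm, spectral functions of symmetric matrices are
     C-Lipschitz, and [V diag(lam - mu) V^T - T = (U - V) M U^T + V M (U - V)^T]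
     has Frobenius norm at most [2 sqrt(N) |U - V| |E|].
   As [2 |U - V| <= delta], no second-order term is needed. *)

Section RealSpectral.
Variable R : rcfType.

Lemma trmx_mul_selfE n (x : 'cV[R]_n) : (x^T *m x) 0 0 = \sum_i x i 0 ^+ 2.
Proof. by rewrite mxE; apply: eq_bigr => i _; rewrite mxE expr2. Qed.

Lemma trmx_mul_self_gt0 n (x : 'cV[R]_n) : x != 0 -> 0 < (x^T *m x) 0 0.
Proof.
move=> x0; rewrite trmx_mul_selfE lt_def sumr_ge0 ?andbT => [|i _]; last exact: sqr_ge0.
apply: contra x0 => /eqP /psumr_eq0P x0; apply/eqP/colP => i.
by apply/eqP; rewrite mxE -sqrf_eq0 x0 // => j _; rewrite sqr_ge0.
Qed.

Lemma trmx_mul_comm n (x y : 'cV[R]_n) : y^T *m x = x^T *m y.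
Proof.
by rewrite -[y^T *m x]trmxK trmx_mul trmxK [_ *m _]mx11_scalar tr_scalar_mx -mx11_scalar.
Qed.

Definition householder n (w : 'cV[R]_n) : 'M[R]_n :=
  1%:M - (2 / (w^T *m w) 0 0) *: (w *m w^T).

Lemma householder_sym n (w : 'cV[R]_n) : (householder w)^T = householder w.
Proof. by rewrite /householder linearB linearZ /= trmx1 trmx_mul trmxK. Qed.

Lemma householder_orthomx n (w : 'cV[R]_n) : w != 0 ->
  (householder w)^T *m householder w = 1%:M.
Proof.
move=> w0; rewrite householder_sym /householder; set c := (w^T *m w) 0 0.
have c0 : c != 0 by rewrite gt_eqF // trmx_mul_self_gt0.
have WW : w *m w^T *m (w *m w^T) = c *: (w *m w^T).
  by rewrite mulmxA -(mulmxA w) [w^T *m w]mx11_scalar mul_mx_scalar -scalemxAl.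
rewrite mulmxBl !mulmxBr mul1mx mulmx1 -scalemxAl -!scalemxAr WW !scalerA.
have -> : 2 / c * (2 / c) * c = 2 / c + 2 / c by field.
by rewrite scalerDl opprB addrK mul1mx subrK.
Qed.

Lemma householder_swap n (x y : 'cV[R]_n) : x^T *m x = y^T *m y -> x != y ->
  householder (x - y) *m y = x.
Proof.
move=> xxyy xy; set w := x - y.
have w0 : w != 0 by rewrite subr_eq0.
have c0 : (w^T *m w) 0 0 != 0 by rewrite gt_eqF ?trmx_mul_self_gt0.
(* Equal lengths make [w^T w = -2 w^T y], so the reflection maps [y] to [y + w]. *)
have wwE : (w^T *m w) 0 0 = - 2 * (w^T *m y) 0 0.
  have wT : w^T = x^T - y^T by apply/matrixP => i j; rewrite !mxE.
  by rewrite wT !mulmxBl !mulmxBr xxyy (trmx_mul_comm x y) !mxE; ring.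
have wy0 : (w^T *m y) 0 0 != 0.
  by apply: contraNneq c0; rewrite wwE => ->; rewrite mulr0.
rewrite /householder mulmxBl mul1mx -scalemxAl -mulmxA [w^T *m y]mx11_scalar.
rewrite mul_mx_scalar scalerA wwE.
have -> : 2 / (- 2 * (w^T *m y) 0 0) * (w^T *m y) 0 0 = -1 by field.
by rewrite scaleN1r opprK addrC subrK.
Qed.

Lemma exists_orthomx_col0 n (x : 'cV[R]_n.+1) : x^T *m x = 1%:M ->
  exists2 H : 'M[R]_n.+1, H^T *m H = 1%:M & H *m delta_mx 0 0 = x.
Proof.
move=> xx; pose e : 'cV[R]_n.+1 := delta_mx 0 0.
have [->|xe] := eqVneq x e; first by exists 1%:M; rewrite ?trmx1 mul1mx.
have ee : e^T *m e = 1%:M.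
  by rewrite trmx_delta mul_delta_mx; apply/matrixP => i j; rewrite !ord1 !mxE.
exists (householder (x - e)); first by rewrite householder_orthomx ?subr_eq0.
by rewrite householder_swap // xx ee.
Qed.

Lemma sym_eigenvector n (A : 'M[R]_n.+1) : A^T = A ->
  exists r : R, exists2 x : 'cV[R]_n.+1, A *m x = r *: x & x != 0.
Proof.
move=> sA; pose f := @real_complex R; pose Ac := map_mx f A.
have Aherm : Ac \is hermsymmx.
  apply: realsym_hermsym.
    by apply/is_hermitianmxP; rewrite expr0 scale1r map_mx_id // /Ac map_trmx sA.
  by apply/mxOverP => i j; rewrite mxE; apply/complex_realP; exists (A i j).
have /orthomx_spectralP AcE := hermitian_normalmx Aherm.
set P := spectralmx Ac in AcE; set d := spectral_diag Ac in AcE.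
have Pu : P \in unitmx by apply: spectral_unit.
have : eigenvalue Ac (d 0 0).
  apply/eigenvalueP; exists (row 0 P).
    rewrite AcE !mulmxA -!row_mul mulmxV // mul1mx mul_diag_mx.
    by apply/rowP => j; rewrite !mxE.
  apply: contraTneq isT => P0.
  have : row 0 (P *m invmx P) = 0 by rewrite row_mul P0 mul0mx.
  by rewrite mulmxV // => /rowP /(_ 0) /eqP; rewrite !mxE eqxx oner_eq0.
have /complex_realP [r ->] : d 0 0 \is Num.real.
  exact: mxOverP (hermitian_spectral_diag_real Aherm) 0 0.
rewrite (eigenvalue_map f) => /eigenvalueP [v vA v0].
exists r, v^T; last by rewrite trmx_eq0.
by rewrite -{1}sA -trmx_mul vA linearZ.
Qed.

Lemma sym_unit_eigenvector n (A : 'M[R]_n.+1) : A^T = A ->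
  exists r : R, exists2 x : 'cV[R]_n.+1, A *m x = r *: x & x^T *m x = 1%:M.
Proof.
move=> /sym_eigenvector [r [x Ax x0]].
have := trmx_mul_self_gt0 x0; set c := (x^T *m x) 0 0 => c0.
exists r, ((Num.sqrt c)^-1 *: x); first by rewrite -scalemxAr Ax !scalerA mulrC.
rewrite -scalemxAr linearZ /= -scalemxAl scalerA -expr2 exprVn sqr_sqrtr ?ltW //.
by rewrite [x^T *m x]mx11_scalar -/c scale_scalar_mx mulVf ?gt_eqF.
Qed.

Lemma sym_col0_block m (B : 'M[R]_(1 + m)) (r : R) : B^T = B ->
  B *m delta_mx 0 0 = r *: (delta_mx 0 0 : 'cV_(1 + m)) ->
  B = block_mx r%:M 0 0 (drsubmx B).
Proof.
move=> sB.
have -> : delta_mx 0 0 = col_mx (1%:M : 'M[R]_1) (0 : 'M[R]_(m, 1)) :> 'cV[R]_(1 + m).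
  apply/colP => i; rewrite !mxE; case: splitP => j /= ij; rewrite !mxE.
    by rewrite -val_eqE /= ij ord1.
  by rewrite -val_eqE /= ij.
rewrite -[B in B *m _]submxK mul_block_col !mulmx1 !mulmx0 !addr0 scale_col_mx scaler0.
move=> /eq_col_mx [ulE dlE].
have urE : ursubmx B = 0 by rewrite -sB -trmx_dlsub dlE trmx0.
by rewrite -{1}[B]submxK ulE dlE urE scale_scalar_mx mulr1.
Qed.

Theorem sym_spectral n (A : 'M[R]_n) : A^T = A ->
  exists Q : 'M[R]_n, exists2 d : 'rV[R]_n,
    Q^T *m Q = 1%:M & A = Q *m diag_mx d *m Q^T.
Proof.
elim: n A => [|m IH] A sA.
  by exists 1%:M, 0; [rewrite trmx1 mul1mx | apply/matrixP => [[]]].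
have [r [x Ax xx]] := sym_unit_eigenvector sA.
have [H HH He] := exists_orthomx_col0 xx; have HHt := mulmx1C HH.
(* Retype at [1 + m] so that the block decomposition lemmas apply. *)
move: A sA Ax H HH He HHt; rewrite -[m.+1]/(1 + m)%N => A sA Ax H HH He HHt.
pose B := H^T *m A *m H.
have sB : B^T = B by rewrite /B !trmx_mul trmxK sA mulmxA.
have Be : B *m delta_mx 0 0 = r *: (delta_mx 0 0 : 'cV_(1 + m)).
  by rewrite /B -!mulmxA He Ax -scalemxAr -He mulmxA HH mul1mx.
have sBdr : (drsubmx B)^T = drsubmx B by rewrite trmx_drsub sB.
have [Q1 [d1 Q1Q1 drE]] := IH _ sBdr.
exists (H *m block_mx 1%:M 0 0 Q1), (row_mx r%:M d1).
  rewrite trmx_mul tr_block_mx !trmx0 trmx1 mulmxA -(mulmxA _ H^T) HH mulmx1.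
  rewrite mulmx_block !(mulmx0, mul0mx, mulmx1, mul1mx, addr0, add0r) Q1Q1.
  by rewrite -scalar_mx_block.
have -> : A = H *m B *m H^T by rewrite /B !mulmxA HHt mul1mx -mulmxA HHt mulmx1.
rewrite {1}(sym_col0_block sB Be) drE trmx_mul tr_block_mx !trmx0 trmx1 diag_mx_row.
rewrite -!mulmxA; congr (_ *m _); rewrite !mulmxA; congr (_ *m _).
rewrite !mulmx_block !(mulmx0, mul0mx, mulmx1, mul1mx, addr0, add0r).
by congr block_mx; apply/matrixP => i j; rewrite !ord1 !mxE.
Qed.

End RealSpectral.

Section EuclideanNorm.
Variable R : rcfType.
Implicit Types I : finType.

Definition l2norm I (x : I -> R) := Num.sqrt (\sum_i x i ^+ 2).

Lemma le_of_sqr_le (a b : R) : 0 <= b -> a ^+ 2 <= b ^+ 2 -> a <= b.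
Proof.
move=> b0 ab; have [a0|a0] := leP a 0; first exact: le_trans a0 b0.
by rewrite -(@ler_pXn2r _ 2) // nnegrE ltW.
Qed.

Lemma l2norm_ge0 I (x : I -> R) : 0 <= l2norm x.
Proof. exact: sqrtr_ge0. Qed.

Lemma l2norm_sqr I (x : I -> R) : l2norm x ^+ 2 = \sum_i x i ^+ 2.
Proof. by rewrite sqr_sqrtr // sumr_ge0 // => i _; rewrite sqr_ge0. Qed.

Lemma l2norm_eq0 I (x : I -> R) : l2norm x = 0 -> forall i, x i = 0.
Proof.
move=> /eqP; rewrite sqrtr_eq0 => x_le0 i.
have x_ge0 j : true -> 0 <= x j ^+ 2 by rewrite sqr_ge0.
have sum0 : \sum_j x j ^+ 2 = 0 by apply/eqP; rewrite eq_le x_le0 sumr_ge0.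
by apply/eqP; rewrite -sqrf_eq0; apply/eqP; apply: (psumr_eq0P x_ge0 sum0).
Qed.

(* Lagrange's identity: the defect in Cauchy-Schwarz is a sum of squares. *)
Lemma sqr_sum_mul_le I (x y : I -> R) :
  (\sum_i x i * y i) ^+ 2 <= (\sum_i x i ^+ 2) * (\sum_i y i ^+ 2).
Proof.
have lagrange : \sum_i \sum_j (x i * y j - x j * y i) ^+ 2 =
    2 * ((\sum_i x i ^+ 2) * (\sum_i y i ^+ 2) - (\sum_i x i * y i) ^+ 2).
  have -> : \sum_i \sum_j (x i * y j - x j * y i) ^+ 2 =
      \sum_i \sum_j x i ^+ 2 * y j ^+ 2 + \sum_i \sum_j x j ^+ 2 * y i ^+ 2
      - 2 * \sum_i \sum_j x i * y i * (x j * y j).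
    rewrite mulr_sumr -!big_split -sumrB /=; apply: eq_bigr => i _.
    by rewrite mulr_sumr -!big_split -sumrB /=; apply: eq_bigr => j _; ring.
  rewrite [\sum_i \sum_j x j ^+ 2 * y i ^+ 2]exchange_big /= expr2 !mulr_suml.
  under [X in 2 * (X - _)]eq_bigr do rewrite mulr_sumr.
  under [X in 2 * (_ - X)]eq_bigr do rewrite mulr_sumr.
  ring.
rewrite -subr_ge0 -(@pmulr_rge0 _ 2) // -lagrange.
by apply: sumr_ge0 => i _; apply: sumr_ge0 => j _; rewrite sqr_ge0.
Qed.

Lemma sum_mul_le_l2norm I (x y : I -> R) : \sum_i x i * y i <= l2norm x * l2norm y.
Proof.
apply: le_of_sqr_le; first by rewrite mulr_ge0 ?l2norm_ge0.
by rewrite exprMn !l2norm_sqr sqr_sum_mul_le.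
Qed.

Lemma l2normD I (x y : I -> R) : l2norm (fun i => x i + y i) <= l2norm x + l2norm y.
Proof.
apply: le_of_sqr_le; first by rewrite addr_ge0 ?l2norm_ge0.
rewrite l2norm_sqr sqrrD !l2norm_sqr.
have -> : \sum_i (x i + y i) ^+ 2 =
    \sum_i x i ^+ 2 + 2 * \sum_i x i * y i + \sum_i y i ^+ 2.
  by rewrite mulr_sumr -!big_split /=; apply: eq_bigr => i _; ring.
by rewrite lerD2r lerD2l -[X in _ <= X]mulr_natl ler_pM2l // sum_mul_le_l2norm.
Qed.

Lemma l2norm_le_scale I (x y : I -> R) (c : R) : 0 <= c ->
  (forall i, x i ^+ 2 <= c ^+ 2 * y i ^+ 2) -> l2norm x <= c * l2norm y.
Proof.
move=> c0 xy; apply: le_of_sqr_le; first by rewrite mulr_ge0 ?l2norm_ge0.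
by rewrite exprMn !l2norm_sqr mulr_sumr; apply: ler_sum => i _.
Qed.

End EuclideanNorm.

Section MatrixNorms.
Variables (R : realType) (n : nat).
Implicit Types (X Y Q : 'M[R]_n) (x y : 'cV[R]_n).
Local Open Scope classical_set_scope.

Definition frob X := l2norm (fun ij : 'I_n * 'I_n => X ij.1 ij.2).

Lemma vnormE x : vnorm x = l2norm (fun i => x i 0).
Proof. by []. Qed.

Lemma vnorm_ge0 x : 0 <= vnorm x.
Proof. exact: sqrtr_ge0. Qed.

Lemma vnorm_delta (i : 'I_n) : vnorm (delta_mx i 0 : 'cV[R]_n) = 1.
Proof.
rewrite /vnorm (bigD1 i) //= big1 => [|j /negbTE ji]; last by rewrite mxE ji expr0n.
by rewrite mxE !eqxx expr1n addr0 sqrtr1.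
Qed.

Lemma vnormZ c x : vnorm (c *: x) = `|c| * vnorm x.
Proof.
rewrite /vnorm -sqrtr_sqr -sqrtrM ?sqr_ge0 // mulr_sumr.
by congr Num.sqrt; apply: eq_bigr => i _; rewrite mxE exprMn.
Qed.

Lemma vnormD x y : vnorm (x + y) <= vnorm x + vnorm y.
Proof.
rewrite !vnormE (_ : (fun i => _) = fun i => x i 0 + y i 0); first exact: l2normD.
by apply/funext => i; rewrite mxE.
Qed.

Lemma vnorm_eq0 x : vnorm x = 0 -> x = 0.
Proof. by move/l2norm_eq0 => x0; apply/colP => i; rewrite x0 mxE. Qed.

Lemma vnorm_orthomx Q x : Q^T *m Q = 1%:M -> vnorm (Q *m x) = vnorm x.
Proof.
move=> QQ; rewrite /vnorm -!trmx_mul_selfE.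
by rewrite trmx_mul -mulmxA (mulmxA Q^T) QQ mul1mx.
Qed.

Lemma frob_sqr X : frob X ^+ 2 = \sum_i \sum_j X i j ^+ 2.
Proof. by rewrite pair_bigA l2norm_sqr. Qed.

Lemma frobE X : frob X = Num.sqrt (\sum_i \sum_j X i j ^+ 2).
Proof. by rewrite -frob_sqr sqrtr_sqr ger0_norm ?l2norm_ge0. Qed.

Lemma frob_trace X : frob X = Num.sqrt (\tr (X^T *m X)).
Proof.
rewrite frobE exchange_big; congr Num.sqrt; apply: eq_bigr => j _.
by rewrite mxE; apply: eq_bigr => i _; rewrite mxE expr2.
Qed.

Lemma frob_orthomxl Q X : Q^T *m Q = 1%:M -> frob (Q *m X) = frob X.
Proof. by move=> QQ; rewrite !frob_trace trmx_mul -mulmxA (mulmxA Q^T) QQ mul1mx. Qed.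

Lemma frob_orthomxr Q X : Q *m Q^T = 1%:M -> frob (X *m Q) = frob X.
Proof.
by move=> QQ; rewrite !frob_trace trmx_mul -mulmxA mxtrace_mulC -!mulmxA QQ mulmx1.
Qed.

Lemma frob_trmx X : frob X^T = frob X.
Proof.
rewrite !frobE exchange_big; congr Num.sqrt.
by apply: eq_bigr => i _; apply: eq_bigr => j _; rewrite mxE.
Qed.

Lemma frobD X Y : frob (X + Y) <= frob X + frob Y.
Proof.
rewrite /frob (_ : (fun ij => _) = fun ij => X ij.1 ij.2 + Y ij.1 ij.2).
  exact: l2normD.
by apply/funext => ij; rewrite mxE.
Qed.

Lemma vnorm_mulmx_le_frob X x : vnorm (X *m x) <= frob X * vnorm x.
Proof.
apply: le_of_sqr_le; first by rewrite mulr_ge0 ?l2norm_ge0.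
rewrite exprMn frob_sqr !vnormE !l2norm_sqr mulr_suml; apply: ler_sum => i _.
by rewrite mxE; apply: sqr_sum_mul_le.
Qed.

Let unit_image X := [set vnorm (X *m x) | x in [set x | vnorm x = 1]].

Lemma opnormE X : opnorm X = sup (unit_image X).
Proof. by []. Qed.

Lemma opnorm_ub X x : vnorm x = 1 -> vnorm (X *m x) <= opnorm X.
Proof.
move=> x1; apply: ub_le_sup; last by exists x.
exists (frob X) => _ [y /= y1 <-].
by rewrite (le_trans (vnorm_mulmx_le_frob X y)) // y1 mulr1.
Qed.

Lemma opnorm_ge0 X : 0 <= opnorm X.
Proof.
have [/set0P [_ [x x1 _]]|/negPn/eqP E0] := boolP (unit_image X != set0).
  exact: le_trans (vnorm_ge0 _) (opnorm_ub X x1).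
by rewrite opnormE E0 sup0.
Qed.

Lemma opnorm_le X c : 0 <= c ->
  (forall x, vnorm x = 1 -> vnorm (X *m x) <= c) -> opnorm X <= c.
Proof.
move=> c0 Xc; have [/set0P E0|/negPn/eqP E0] := boolP (unit_image X != set0).
  by apply: ge_sup E0 _ => _ [x x1 <-]; apply: Xc.
by rewrite opnormE E0 sup0.
Qed.

Lemma vnorm_mulmx_le X x : vnorm (X *m x) <= opnorm X * vnorm x.
Proof.
have [x0|x0] := eqVneq (vnorm x) 0.
  by rewrite x0 mulr0 (vnorm_eq0 x0) mulmx0 -x0 (vnorm_eq0 x0).
have x_gt0 : 0 < vnorm x by rewrite lt_def x0 vnorm_ge0.
have x1 : vnorm ((vnorm x)^-1 *: x) = 1.
  by rewrite vnormZ ger0_norm ?mulVf // invr_ge0 vnorm_ge0.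
have := opnorm_ub X x1; rewrite -scalemxAr vnormZ ger0_norm ?invr_ge0 ?vnorm_ge0 //.
by rewrite ler_pdivrMl // mulrC.
Qed.

Lemma opnorm_mulmx X Y : opnorm (X *m Y) <= opnorm X * opnorm Y.
Proof.
apply: opnorm_le => [|x x1]; first by rewrite mulr_ge0 ?opnorm_ge0.
rewrite -mulmxA (le_trans (vnorm_mulmx_le X _)) // ler_wpM2l ?opnorm_ge0 //.
by rewrite -[opnorm Y]mulr1 -x1 vnorm_mulmx_le.
Qed.

Lemma opnormD X Y : opnorm (X + Y) <= opnorm X + opnorm Y.
Proof.
apply: opnorm_le => [|x x1]; first by rewrite addr_ge0 ?opnorm_ge0.
by rewrite mulmxDl (le_trans (vnormD _ _)) // lerD ?opnorm_ub.
Qed.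

Lemma opnorm_le_frob X : opnorm X <= frob X.
Proof.
apply: opnorm_le => [|x x1]; first exact: l2norm_ge0.
by rewrite (le_trans (vnorm_mulmx_le_frob X x)) // x1 mulr1.
Qed.

Lemma frob_le_opnorm X : frob X <= Num.sqrt n%:R * opnorm X.
Proof.
apply: le_of_sqr_le; first by rewrite mulr_ge0 ?sqrtr_ge0 ?opnorm_ge0.
rewrite frob_sqr exchange_big /= exprMn sqr_sqrtr ?ler0n // mulr_natl.
rewrite (_ : _ *+ n = \sum_(j < n) opnorm X ^+ 2); last by rewrite sumr_const card_ord.
apply: ler_sum => j _; have := opnorm_ub X (vnorm_delta j).
rewrite -colE -(ler_sqr (vnorm_ge0 _) (opnorm_ge0 _)) vnormE l2norm_sqr.
apply: le_trans; rewrite [leRHS](eq_bigr (fun i => X i j ^+ 2)) // => i _.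
by rewrite mxE.
Qed.

Lemma opnorm_orthomxl Q X : Q^T *m Q = 1%:M -> opnorm (Q *m X) = opnorm X.
Proof.
move=> QQ; rewrite /opnorm; congr sup; apply/seteqP.
by split=> _ [x x1 <-]; exists x => //; rewrite -mulmxA (vnorm_orthomx _ QQ).
Qed.

Lemma opnorm_orthomxr Q X : Q^T *m Q = 1%:M -> opnorm (X *m Q) = opnorm X.
Proof.
move=> QQ; have QtQt : Q^T^T *m Q^T = 1%:M by rewrite trmxK mulmx1C.
rewrite /opnorm; congr sup; apply/seteqP; split=> _ [x /= x1 <-].
  by exists (Q *m x); rewrite /= ?(vnorm_orthomx _ QQ) ?mulmxA.
exists (Q^T *m x); rewrite /= ?(vnorm_orthomx _ QtQt) //.
by rewrite mulmxA -(mulmxA X) (mulmx1C QQ) mulmx1.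
Qed.

Lemma opnorm_orthomx_conj Q X : Q^T *m Q = 1%:M -> opnorm (Q *m X *m Q^T) = opnorm X.
Proof.
by move=> QQ; rewrite opnorm_orthomxr ?opnorm_orthomxl // trmxK mulmx1C.
Qed.

Lemma diag_le_opnorm (d : 'rV[R]_n) i : `|d 0 i| <= opnorm (diag_mx d).
Proof.
have := opnorm_ub (diag_mx d) (vnorm_delta i).
suff -> : diag_mx d *m delta_mx i 0 = d 0 i *: (delta_mx i 0 : 'cV[R]_n).
  by rewrite vnormZ vnorm_delta mulr1.
apply/matrixP => j k; rewrite mul_diag_mx !mxE.
by case: eqP => [->|_]; rewrite ?mulr0 ?mulr1.
Qed.

Lemma opnorm_diag_le (d : 'rV[R]_n) c : 0 <= c -> (forall i, `|d 0 i| <= c) ->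
  opnorm (diag_mx d) <= c.
Proof.
move=> c0 dc; apply: opnorm_le => // x x1; rewrite -[c]mulr1 -x1 !vnormE.
apply: l2norm_le_scale => // i; rewrite mul_diag_mx mxE exprMn ler_wpM2r ?sqr_ge0 //.
by rewrite -real_normK ?num_real // ler_sqr ?nnegrE.
Qed.

End MatrixNorms.

Section SpectralFilter.
Variable R : realType.

Lemma expr_spectral n (Q : 'M[R]_n) (d : 'rV[R]_n) k : Q^T *m Q = 1%:M ->
  (Q *m diag_mx d *m Q^T) ^+ k = Q *m diag_mx (map_mx (fun x => x ^+ k) d) *m Q^T.
Proof.
move=> QQ; elim: k => [|k IHk].
  rewrite expr0 (_ : diag_mx _ = 1%:M) ?mulmx1 ?(mulmx1C QQ) //.
  by apply/matrixP => i j; rewrite !mxE expr0.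
rewrite exprS IHk -mulmxE !mulmxA -(mulmxA _ Q^T Q) QQ mulmx1.
rewrite -(mulmxA Q) mulmx_diag.
by congr (_ *m diag_mx _ *m _); apply/rowP => i; rewrite !mxE exprS.
Qed.

Lemma graph_filter_spectral n (h : nat -> R) (Q : 'M[R]_n) (d : 'rV[R]_n) :
  (forall l : R, cvgn (series (fun k => h k * l ^+ k))) -> Q^T *m Q = 1%:M ->
  graph_filter h (Q *m diag_mx d *m Q^T) =
  Q *m diag_mx (map_mx (freq_resp h) d) *m Q^T.
Proof.
move=> h_cvg QQ; apply/matrixP => i j; rewrite mxE.
have entry e : (Q *m diag_mx e *m Q^T) i j = \sum_l Q i l * Q j l * e 0 l.
  by rewrite mxE; apply: eq_bigr => l _; rewrite mul_mx_diag !mxE mulrAC.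
rewrite entry; apply: cvg_lim => //.
have -> : series (fun k => h k * ((Q *m diag_mx d *m Q^T) ^+ k) i j) =
    (fun m => \sum_l Q i l * Q j l * series (fun k => h k * d 0 l ^+ k) m).
  apply/funext => m; rewrite /series /=.
  under eq_bigr do rewrite expr_spectral // entry mulr_sumr.
  rewrite exchange_big /=; apply: eq_bigr => l _; rewrite mulr_sumr.
  by apply: eq_bigr => k _; rewrite mxE mulrCA.
apply: cvg_big => [|l _]; first exact: add_continuous.
by rewrite mxE; apply: cvgM; [exact: cvg_cst | exact: h_cvg].
Qed.

Lemma graph_filter_orthomx_conj n (h : nat -> R) (P A : 'M[R]_n) :
  (forall l : R, cvgn (series (fun k => h k * l ^+ k))) ->
  P^T *m P = 1%:M -> A^T = A ->
  graph_filter h (P^T *m A *m P) = P^T *m graph_filter h A *m P.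
Proof.
move=> h_cvg PP /sym_spectral [Q [d QQ ->]].
have PtQ : (P^T *m Q)^T *m (P^T *m Q) = 1%:M.
  by rewrite trmx_mul trmxK mulmxA -(mulmxA Q^T) (mulmx1C PP) mulmx1.
have conjE D : P^T *m (Q *m D *m Q^T) *m P = P^T *m Q *m D *m (P^T *m Q)^T.
  by rewrite trmx_mul trmxK !mulmxA.
by rewrite conjE !graph_filter_spectral // conjE.
Qed.

End SpectralFilter.

Section LipschitzPerturbation.
Variables (R : realType) (n : nat) (f : R -> R) (C : R).
Hypothesis C_ge0 : 0 <= C.
Hypothesis f_lipschitz : forall x y, `|f y - f x| <= C * `|y - x|.
Implicit Types (V Q U : 'M[R]_n) (a b : 'rV[R]_n).

Lemma opnorm_spectral_fun_sub V a b (eps : R) : V^T *m V = 1%:M -> 0 <= eps ->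
  (forall i, `|a 0 i - b 0 i| <= eps) ->
  opnorm (V *m diag_mx (map_mx f a) *m V^T - V *m diag_mx (map_mx f b) *m V^T)
  <= C * eps.
Proof.
move=> VV eps0 ab; set fa := map_mx f a; set fb := map_mx f b.
rewrite -mulmxBl -mulmxBr.
have -> : diag_mx fa - diag_mx fb = diag_mx (fa - fb).
  by apply/matrixP => i j; rewrite !mxE mulrnBl.
rewrite opnorm_orthomx_conj //.
apply: opnorm_diag_le => [|i]; first exact: mulr_ge0.
by rewrite !mxE (le_trans (f_lipschitz _ _)) // ler_wpM2l.
Qed.

(* Conjugating by [V^T] and [Q] turns the difference into the matrix with
   entries [W i j * (a i - b j)], where [W := V^T Q]. *)
Lemma frob_spectral_lipschitz V Q a b : V^T *m V = 1%:M -> Q^T *m Q = 1%:M ->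
  frob (V *m diag_mx (map_mx f a) *m V^T - Q *m diag_mx (map_mx f b) *m Q^T)
  <= C * frob (V *m diag_mx a *m V^T - Q *m diag_mx b *m Q^T).
Proof.
move=> VV QQ; pose W := V^T *m Q.
have conjE d e : frob (V *m diag_mx d *m V^T - Q *m diag_mx e *m Q^T) =
    frob (diag_mx d *m W - W *m diag_mx e).
  rewrite -(@frob_orthomxl _ _ V^T) ?trmxK ?(mulmx1C VV) //.
  rewrite -(@frob_orthomxr _ _ Q) ?(mulmx1C QQ) // mulmxBr mulmxBl !mulmxA VV mul1mx.
  by rewrite -!mulmxA QQ mulmx1 /W !mulmxA.
rewrite !conjE; clearbody W; apply: l2norm_le_scale => // -[i j] /=.
rewrite !mul_diag_mx !mul_mx_diag !mxE.
have -> : (f (a 0 i) * W i j - W i j * f (b 0 j)) ^+ 2 =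
    W i j ^+ 2 * (f (a 0 i) - f (b 0 j)) ^+ 2 by ring.
have -> : C ^+ 2 * (a 0 i * W i j - W i j * b 0 j) ^+ 2 =
    W i j ^+ 2 * (C * (a 0 i - b 0 j)) ^+ 2 by ring.
rewrite ler_wpM2l ?sqr_ge0 // -(real_normK (num_real (f _ - _))).
rewrite -(real_normK (num_real (C * _))) ler_sqr ?nnegrE //.
by rewrite normrM (ger0_norm C_ge0) f_lipschitz.
Qed.

Lemma opnorm_spectral_perturbation V Q U (lam be mu : 'rV[R]_n) (eps : R) :
  V^T *m V = 1%:M -> Q^T *m Q = 1%:M -> U^T *m U = 1%:M ->
  V *m diag_mx lam *m V^T - Q *m diag_mx be *m Q^T = U *m diag_mx mu *m U^T ->
  opnorm (U *m diag_mx mu *m U^T) <= eps ->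
  opnorm (V *m diag_mx (map_mx f lam) *m V^T - Q *m diag_mx (map_mx f be) *m Q^T)
  <= C * (1 + 2 * opnorm (U - V) * Num.sqrt n%:R) * eps.
Proof.
move=> VV QQ UU E_eq; set M := diag_mx mu; rewrite opnorm_orthomx_conj // => M_le.
have eps0 : 0 <= eps := le_trans (opnorm_ge0 _) M_le.
set t := opnorm (U - V); set lam' := lam - mu.
set A := V *m diag_mx (map_mx f lam) *m V^T.
set B := Q *m diag_mx (map_mx f be) *m Q^T.
set A' := V *m diag_mx (map_mx f lam') *m V^T.
have -> : A - B = (A - A') + (A' - B) by rewrite addrA subrK.
apply: le_trans (opnormD _ _) _.
have near_eig : opnorm (A - A') <= C * eps.
  apply: opnorm_spectral_fun_sub => // i.
  by rewrite !mxE opprB addrC subrK (le_trans (diag_le_opnorm _ _)).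
have eig_diff : V *m diag_mx lam' *m V^T - Q *m diag_mx be *m Q^T =
    (U - V) *m M *m U^T + V *m M *m (U - V)^T.
  have -> : diag_mx lam' = diag_mx lam - M.
    by apply/matrixP => i j; rewrite !mxE mulrnBl.
  have -> : (U - V)^T = U^T - V^T by apply/matrixP => i j; rewrite !mxE.
  rewrite mulmxBr mulmxBl addrAC E_eq !mulmxBl !mulmxBr.
  by rewrite addrA subrK.
have far_eig : opnorm (A' - B) <= C * (2 * t * Num.sqrt n%:R * eps).
  apply: le_trans (opnorm_le_frob _) _.
  apply: le_trans (frob_spectral_lipschitz lam' be VV QQ) _.
  rewrite ler_wpM2l // eig_diff; apply: le_trans (frobD _ _) _.
  rewrite (frob_orthomxr (Q := U^T)) ?trmxK // -mulmxA (frob_orthomxl (Q := V)) //.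
  rewrite -[frob (M *m _)]frob_trmx trmx_mul trmxK tr_diag_mx.
  rewrite -mulr2n -[leLHS]mulr_natl -!mulrA ler_pM2l //.
  apply: le_trans (frob_le_opnorm _) _; rewrite mulrCA ler_wpM2l ?sqrtr_ge0 //.
  by apply: le_trans (opnorm_mulmx _ _) _; rewrite ler_wpM2l ?opnorm_ge0.
rewrite (_ : _ * eps = C * eps + C * (2 * t * Num.sqrt n%:R * eps)); last by ring.
exact: lerD near_eig far_eig.
Qed.

End LipschitzPerturbation.

Lemma perm_mx_orthomx (R : realType) n (s : 'S_n) :
  (perm_mx s)^T *m perm_mx s = 1%:M :> 'M[R]_n.
Proof. by rewrite tr_perm_mx -perm_mxM mulVg perm_mx1. Qed.

Lemma pnorm_le_conj (R : realType) n (s : 'S_n) (A B : 'M[R]_n) :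
  pnorm A B <= opnorm (A - (perm_mx s)^T *m B *m perm_mx s).
Proof.
rewrite /pnorm (bigD1 s^-1%g) //= ge_min; apply/orP; left.
rewrite tr_perm_mx invgK.
rewrite -[leRHS](opnorm_orthomxl (Q := perm_mx s)) ?perm_mx_orthomx //.
by rewrite mulmxBr !mulmxA (mulmx1C (perm_mx_orthomx _ _)) mul1mx.
Qed.

Unset Implicit Arguments.
Theorem theorem1 (R : realType) (N : nat) (S : 'M[R]_N)
  (V : 'M[R]_N) (lam : 'rV[R]_N) (h : nat -> R) (C : R) :
  gso S -> orthonormal_mx V -> S = V *m diag_mx lam *m V^T ->
  (* h is an (everywhere convergent) analytic filter with |h| <= 1 *)
  (forall l : R, cvgn (series (fun k => h k * l ^+ k))) ->
  (forall l : R, `|freq_resp h l| <= 1) ->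
  (* Lipschitz with constant C > 0 *)
  0 < C ->
  (forall l1 l2 : R, `|freq_resp h l2 - freq_resp h l1| <= C * `|l2 - l1|) ->
  (* the O(eps^2) term: uniform constant K, for eps small *)
  exists K : R, exists eps0 : R, 0 < eps0 /\
  forall (Shat : 'M[R]_N) (s0 : 'S_N) (U : 'M[R]_N) (mu : 'rV[R]_N) (eps : R),
    gso Shat ->
    (forall s : 'S_N,
       opnorm (S - (perm_mx s0)^T *m Shat *m perm_mx s0)
       <= opnorm (S - (perm_mx s)^T *m Shat *m perm_mx s)) ->
    orthonormal_mx U ->
    S - (perm_mx s0)^T *m Shat *m perm_mx s0 = U *m diag_mx mu *m U^T ->
    opnorm (S - (perm_mx s0)^T *m Shat *m perm_mx s0) <= eps ->
    eps <= eps0 ->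
    let delta := (opnorm (U - V) + 1) ^+ 2 - 1 in
    pnorm (graph_filter h S) (graph_filter h Shat)
      <= C * (1 + delta * Num.sqrt (N%:R)) * eps + K * eps ^+ 2.
Proof.
(* The bound holds with [K = 0] and any [eps]. *)
move=> _ VV SE h_cvg _ C0 h_lip.
exists 0, 1; split=> // Shat s0 U mu eps sShat _ UU E_eq E_le _ /=.
rewrite mul0r addr0; set P := perm_mx s0 in E_eq E_le *.
have PP : P^T *m P = 1%:M := perm_mx_orthomx _ s0.
have sT : (P^T *m Shat *m P)^T = P^T *m Shat *m P.
  by rewrite !trmx_mul trmxK sShat mulmxA.
have [Q [be QQ TE]] := sym_spectral sT.
apply: le_trans (pnorm_le_conj s0 _ _) _.
rewrite -/P -graph_filter_orthomx_conj // TE SE !graph_filter_spectral //.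
rewrite E_eq in E_le; rewrite SE TE in E_eq.
apply: le_trans (opnorm_spectral_perturbation (ltW C0) h_lip VV QQ UU E_eq E_le) _.
have eps_ge0 : 0 <= eps := le_trans (opnorm_ge0 _) E_le.
apply: ler_wpM2r => //; apply: ler_wpM2l; first exact: ltW.
rewrite lerD2l; apply: ler_wpM2r; first exact: sqrtr_ge0.
by rewrite -subr_ge0 (_ : _ - _ = opnorm (U - V) ^+ 2) ?sqr_ge0 //; ring.
Qed.
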